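(* Let $d\ge2$ and $c\in\mathbb{C}_p$ (no further conditions). The sequence $(a_n)$ satisfies: (1) for $1\le n<d$, $a_n=\binom{1/d}{n}c^n$; (2) for $d^i\le n<d^{i+1}$ with $i\ge1$, $$a_n=\sum\alpha(n_0,n_1,\dots,n_{d^i-1}),$$ where the sum runs over all tuples of non-negative integers $(n_0,\dots,n_{d^i-1})$ with $n_0+d\sum_{k=1}^{d^i-1}kn_k=n$, and $$\alpha(n_0,\dots,n_{d^i-1})=\frac{c^{n_0}}{d^{n_0}n_0!}\prod_{k=1}^{d^i-1}\frac{a_k^{n_k}}{d^{n_k}n_k!}\prod_{j=0}^{\sum_{k=0}^{d^i-1}n_k-1}(1-jd).$$
   Context: Let $\mathbb{C}_p$ be the completion of an algebraic closure of $\mathbb{Q}_p$, $d\ge2$ an integer, $c\in\mathbb{C}_p$, and $(a_n)_{n\ge1}$ the unique sequence in $\mathbb{C}_p$ with the formal identity $\left(1+\sum_{n\ge1}a_nx^n\right)^d=1+cx+\sum_{n\ge1}a_nx^{nd}$. $\binom{1/d}{n}$ is the generalized binomial coefficient. *)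

From HB Require Import structures.
From mathcomp Require Import all_boot all_order all_algebra.
Set Implicit Arguments. Unset Strict Implicit. Unset Printing Implicit Defensive.
Import Order.TTheory GRing.Theory Num.Theory.
Local Open Scope ring_scope.

Definition gbinom (F : fieldType) (r : F) (n : nat) : F :=
  (\prod_(i < n) (r - i%:R)) / (n`!)%:R.

Definition lhs_trunc (F : fieldType) (a : nat -> F) (N : nat) : {poly F} :=
  1 + \sum_(1 <= n < N.+1) a n *: 'X^n.

(* Truncation of the right-hand side series 1 + c x + sum_{n>=1} a_n x^{nd}
   (all monomials of degree <= N are present) *)
Definition rhs_trunc (F : fieldType) (d : nat) (c : F) (a : nat -> F) (N : nat)
  : {poly F} :=
  1 + c *: 'X + \sum_(1 <= n < N.+1) a n *: 'X^(n * d).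

(* The formal identity (1 + sum a_n x^n)^d = 1 + c x + sum a_n x^{nd},
   stated coefficientwise: the N-th coefficient of each side only involves
   the terms of degree <= N. The value a 0 is irrelevant. *)
Definition formal_identity (F : fieldType) (d : nat) (c : F) (a : nat -> F) : Prop :=
  forall N : nat, ((lhs_trunc a N) ^+ d)`_N = (rhs_trunc d c a N)`_N.

(* alpha(n_0, ..., n_{m-1}) where nk k = n_k, m = d^i *)
Definition alpha (F : fieldType) (d : nat) (c : F) (a : nat -> F) (m : nat)
  (nk : nat -> nat) : F :=
  c ^+ nk 0%N / ((d%:R) ^+ nk 0%N * ((nk 0%N)`!)%:R)
  * (\prod_(1 <= k < m) (a k ^+ nk k / ((d%:R) ^+ nk k * ((nk k)`!)%:R)))
  * \prod_(0 <= j < \sum_(0 <= k < m) nk k) (1 - j%:R * d%:R).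

Definition tup_nat (m n : nat) (t : m.-tuple 'I_n.+1) (k : nat) : nat :=
  nth 0%N (map val t) k.

From HB Require Import structures.
From mathcomp Require Import all_boot all_order all_algebra.
From mathcomp Require Import ring zify.
Set Implicit Arguments. Unset Strict Implicit. Unset Printing Implicit Defensive.
Import Order.TTheory GRing.Theory Num.Theory.
Local Open Scope ring_scope.

(* Write P = 1 + sum a_n x^n and U = c x + sum a_n x^(nd), so P^d = 1 + U with
   P(0) = 1 and U(0) = 0.  Then P is the binomial series
   (1 + U)^(1/d) = sum_m binom(1/d, m) U^m.  We prove this without any notion
   of convergence, working with polynomial truncations modulo x^(N+2): both P
   and the binomial series truncated at order N + 1 satisfy the differential
   equation (1 + U) Y' = (1/d) Y U' up to degree N, and in characteristic 0 this
   equation together with Y(0) = 1 determines Y up to degree N + 1.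
   Since the terms a_m x^(md) with md > n do not influence the coefficient of
   x^n, a_n is the n-th coefficient of (1 + U_M)^(1/d), where
   U_M = c x + sum_(m < M) a_m x^(md), for any M with n < M d.  For n < d we take
   M = 1 and get binom(1/d, n) c^n.  For d^i <= n < d^(i+1) we take M = d^i and
   expand the powers of U_M by the multinomial theorem; grouping the terms by
   exponent tuples yields the sum of the alpha(n_0, ..., n_(M-1)). *)

Section TruncatedCongruence.
Variable R : comRingType.

Definition eqmod (n : nat) (p q : {poly R}) := forall k, (k <= n)%N -> p`_k = q`_k.

Lemma eqmod_sym n p q : eqmod n p q -> eqmod n q p.
Proof. by move=> h k hk; rewrite h. Qed.

Lemma eqmod_le m n p q : (m <= n)%N -> eqmod n p q -> eqmod m p q.
Proof. by move=> hmn h k hk; apply: h; apply: leq_trans hmn. Qed.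

Lemma eqmodD n p q p' q' : eqmod n p q -> eqmod n p' q' -> eqmod n (p + p') (q + q').
Proof. by move=> h h' k hk; rewrite !coefD h // h'. Qed.

Lemma eqmodB n p q p' q' : eqmod n p q -> eqmod n p' q' -> eqmod n (p - p') (q - q').
Proof. by move=> h h' k hk; rewrite !coefB h // h'. Qed.

Lemma eqmodZ n a p q : eqmod n p q -> eqmod n (a *: p) (a *: q).
Proof. by move=> h k hk; rewrite !coefZ h. Qed.

(* The coefficient of degree k of a product only involves coefficients of degree <= k. *)
Lemma eqmodM n p q p' q' : eqmod n p q -> eqmod n p' q' -> eqmod n (p * p') (q * q').
Proof.
move=> h h' k hk; rewrite !coefM; apply: eq_bigr => j _.
have hj : (j <= k)%N by rewrite -ltnS.
by rewrite h ?h' ?(leq_trans hj hk) // (leq_trans (leq_subr _ _) hk).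
Qed.

Lemma eqmodX n p q m : eqmod n p q -> eqmod n (p ^+ m) (q ^+ m).
Proof. by move=> h; elim: m => [|m IH] //; rewrite !exprS; apply: eqmodM. Qed.

Lemma eqmod_sum n (I : Type) (r : seq I) (P : pred I) (G H : I -> {poly R}) :
  (forall i, P i -> eqmod n (G i) (H i)) ->
  eqmod n (\sum_(i <- r | P i) G i) (\sum_(i <- r | P i) H i).
Proof. by move=> h k hk; rewrite !coef_sum; apply: eq_bigr => i Pi; apply: h. Qed.

Lemma eqmod_sub0 n p q : eqmod n p q -> eqmod n (p - q) 0.
Proof. by move=> h k hk; rewrite coefB h // subrr coef0. Qed.

Lemma eqmod_deriv n p q : eqmod n.+1 p q -> eqmod n p^`() q^`().
Proof. by move=> h k hk; rewrite !coef_deriv h. Qed.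

Lemma coef_exp_lt (U : {poly R}) m j : U`_0 = 0 -> (j < m)%N -> (U ^+ m)`_j = 0.
Proof.
move=> hU; elim: m j => [|m IH] j hj //; rewrite exprS coefM big1 // => -[[|i] hi] _ /=.
  by rewrite hU mul0r.
by rewrite IH ?mulr0 //; lia.
Qed.

Lemma coef_expM_lt (U V : {poly R}) m j : U`_0 = 0 -> (j < m)%N -> (U ^+ m * V)`_j = 0.
Proof.
move=> hU hj; rewrite coefM big1 // => i _.
by rewrite coef_exp_lt ?mul0r //; apply: leq_ltn_trans hj; rewrite -ltnS.
Qed.

End TruncatedCongruence.

Section BinomialSeries.
Variable F : fieldType.
Hypothesis hchar : [pchar F] =i pred0.

Lemma natr_neq0 n : (n != 0)%N -> (n%:R : F) != 0.
Proof. by move=> hn; rewrite (pcharf0P F).1. Qed.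

Lemma factr_neq0 n : ((n`!)%:R : F) != 0.
Proof. by apply: natr_neq0; rewrite -lt0n fact_gt0. Qed.

Lemma gbinom0 (r : F) : gbinom r 0 = 1.
Proof. by rewrite /gbinom big_ord0 fact0 divr1. Qed.

Lemma gbinomS (r : F) m : m.+1%:R * gbinom r m.+1 = (r - m%:R) * gbinom r m.
Proof.
rewrite /gbinom big_ord_recr /= factS natrM.
have hm := factr_neq0 m; have hSm : (m.+1%:R : F) != 0 by apply: natr_neq0.
by field; rewrite hm addrC natr1 hSm.
Qed.

(* The residual of the differential equation (1 + U) Y' = r Y U' solved by
   Y = (1 + U)^r; it is linear in Y. *)
Definition ode_res (r : F) (U Y : {poly F}) : {poly F} :=
  (1 + U) * Y^`() - r *: (Y * U^`()).

Lemma ode_resB r (U Y Z : {poly F}) : ode_res r U (Y - Z) = ode_res r U Y - ode_res r U Z.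
Proof. by rewrite /ode_res derivB -!mul_polyC; ring. Qed.

(* In characteristic 0, a solution of the equation up to degree n vanishing at
   0 vanishes up to degree n + 1: the coefficient of degree k of the residual
   is (k + 1) Z_(k+1) plus terms involving only Z_0, ..., Z_k. *)
Lemma ode_res_uniq r n (U Z : {poly F}) : U`_0 = 0 -> Z`_0 = 0 ->
  eqmod n (ode_res r U Z) 0 -> eqmod n.+1 Z 0.
Proof.
move=> hU hZ hres; suff Zlow k : (k <= n.+1)%N -> Z`_k = 0.
  by move=> k hk; rewrite coef0 Zlow.
elim/ltn_ind: k => -[|j] IH hj //.
have Zj i : (i <= j)%N -> Z`_i = 0.
  by move=> hi; apply: IH; [rewrite ltnS | apply: leq_trans hj; rewrite ltnW].
have := hres j hj; rewrite coef0 coefB coefZ [(Z * _)`_j]coefM big1; last first.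
  by move=> i _; rewrite Zj ?mul0r // -ltnS.
rewrite mulr0 subr0 coefM big_ord_recl big1; last first.
  by move=> i _; rewrite coef_deriv Zj ?mul0rn ?mulr0 //= subnSK // leq_subr.
rewrite addr0 coefD coef1 hU addr0 mul1r coef_deriv subn0 => /eqP.
by rewrite -mulr_natr mulf_eq0 (negbTE (natr_neq0 _)) // orbF => /eqP.
Qed.

Definition binom_series (r : F) (K : nat) (U : {poly F}) : {poly F} :=
  \sum_(m < K.+1) gbinom r m *: U ^+ m.

Lemma binom_series_coef0 r K (U : {poly F}) : U`_0 = 0 -> (binom_series r K U)`_0 = 1.
Proof.
move=> hU; rewrite coef_sum big_ord_recl /= gbinom0 expr0 scale1r coef1 /=.
by rewrite big1 ?addr0 // => i _; rewrite coefZ coef_exp_lt ?mulr0.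
Qed.

Lemma binom_series_eqmod r K n (U V : {poly F}) :
  eqmod n U V -> eqmod n (binom_series r K U) (binom_series r K V).
Proof. by move=> h; apply: eqmod_sum => m _; apply/eqmodZ/eqmodX. Qed.

Lemma binom_series_coef_linear r n (c : F) :
  (binom_series r n (c *: 'X))`_n = gbinom r n * c ^+ n.
Proof.
rewrite coef_sum big_ord_recr /= big1 ?add0r => [|m _].
  by rewrite exprZn !coefZ coefXn eqxx mulr1.
by rewrite exprZn !coefZ coefXn gtn_eqF ?mulr0.
Qed.

Lemma ode_res_binom_series r K (U : {poly F}) :
  ode_res r U (binom_series r K U) = ((K%:R - r) * gbinom r K) *: (U ^+ K * U^`()).
Proof.
elim: K => [|K IH].
  rewrite /binom_series big_ord1 gbinom0 expr0 scale1r /ode_res derivC.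
  by rewrite mulr0 !sub0r mulr1 scaleNr.
rewrite /binom_series big_ord_recr -/(binom_series r K U) /=.
move: IH; rewrite /ode_res derivD derivZ deriv_exp /=.
have hb : (K%:R - r) * gbinom r K = - (K.+1%:R * gbinom r K.+1).
  by rewrite gbinomS; ring.
rewrite hb; move: (binom_series r K U) (gbinom r K.+1) => S b.
rewrite -!mul_polyC !(polyCN, polyCM, polyCB, polyC_natr) -mulr_natr.
move/eqP; rewrite subr_eq => /eqP IH.
by rewrite mulrDr IH exprS -mulr_natr; ring.
Qed.

(* If P^d = 1 + U up to degree N + 1, then P solves the equation with r = 1/d
   up to degree N (differentiate and multiply by P / d). *)
Lemma root_ode d N (P U : {poly F}) : (0 < d)%N ->
  eqmod N.+1 (P ^+ d) (1 + U) -> eqmod N (ode_res d%:R^-1 U P) 0.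
Proof.
move=> hd hPd; apply: eqmod_sub0.
have hdiff := eqmod_deriv hPd; rewrite deriv_exp derivD derivC add0r in hdiff.
have hd0 : (d%:R : F) != 0 by apply: natr_neq0; rewrite -lt0n.
have -> : (1 + U) * P^`() =
    d%:R^-1 *: (P * (P^`() * P ^+ d.-1 *+ d)) + ((1 + U) - P ^+ d) * P^`().
  rewrite -mulrnAr -scaler_nat !scalerAr scalerA mulVf // scale1r.
  by rewrite mulrCA -exprS prednK //; ring.
rewrite -[X in eqmod _ _ X]addr0; apply: eqmodD.
  by apply: eqmodZ; apply: eqmodM => // k.
rewrite -(mul0r P^`()); apply: eqmodM => [|k //].
exact/(eqmod_le (leqnSn N))/eqmod_sub0/eqmod_sym.
Qed.

Lemma root_coef d N (P U : {poly F}) : (0 < d)%N -> U`_0 = 0 -> P`_0 = 1 ->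
  eqmod N.+1 (P ^+ d) (1 + U) -> P`_N.+1 = (binom_series d%:R^-1 N.+1 U)`_N.+1.
Proof.
move=> hd hU hP hPd; set S := binom_series _ _ _.
have hSres : eqmod N (ode_res d%:R^-1 U S) 0.
  by move=> k hk; rewrite ode_res_binom_series coefZ coef0 coef_expM_lt ?mulr0.
have hPS0 : (P - S)`_0 = 0 by rewrite coefB hP binom_series_coef0 ?subrr.
have hPS := ode_res_uniq hU hPS0.
have /hPS /(_ N.+1 (leqnn _)) : eqmod N (ode_res d%:R^-1 U (P - S)) 0.
  by rewrite ode_resB -(subr0 0); apply: eqmodB => //; apply: root_ode.
by rewrite coefB coef0 => /eqP; rewrite subr_eq0 => /eqP.
Qed.

End BinomialSeries.

Lemma tup_nat_mktuple M n (f : 'I_M -> 'I_n.+1) (k : 'I_M) :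
  tup_nat [tuple f i | i < M] k = f k.
Proof.
rewrite /tup_nat (nth_map (f k)) ?size_tuple ?ltn_ord //.
by rewrite -(tnth_nth (f k) [tuple f i | i < M] k) tnth_mktuple.
Qed.

Lemma coef_prod_poly (R : comRingType) M N (E : nat -> nat -> R) m :
  (\prod_(0 <= k < M) \poly_(j < N.+1) E k j)`_m =
  \sum_(t : M.-tuple 'I_N.+1 | (\sum_(0 <= k < M) tup_nat t k == m)%N)
     \prod_(0 <= k < M) E k (tup_nat t k).
Proof.
rewrite big_mkord; under eq_bigr => k _ do rewrite poly_def.
rewrite bigA_distr_bigA /= coef_sum [RHS]big_mkcond /=.
pose tup (f : {ffun 'I_M -> 'I_N.+1}) := [tuple f i | i < M].
have tup_bij : bijective tup.
  exists (fun t => [ffun k => tnth t k]) => [f|t].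
    by apply/ffunP => k; rewrite ffunE tnth_mktuple.
  by apply: eq_from_tnth => k; rewrite tnth_mktuple ffunE.
rewrite (reindex tup (onW_bij _ tup_bij)); apply: eq_bigr => f _.
have tupE (k : 'I_M) : tup_nat (tup f) k = f k := tup_nat_mktuple f k.
rewrite !big_mkord !(eq_bigr _ (fun k _ => tupE k)) /=.
under eq_bigr => k _ do rewrite -mul_polyC.
rewrite big_split /= prodrXr -rmorph_prod coefCM coefXn eq_sym.
by case: eqP => _; rewrite ?mulr1 ?mulr0 //; apply: eq_bigr => k _; rewrite tupE.
Qed.

Section Multinomial.
Variable F : fieldType.
Hypothesis hchar : [pchar F] =i pred0.

Lemma inv_fact_binom m i : (i <= m)%N ->
  ((i`!)%:R)^-1 * (((m - i)`!)%:R)^-1 = (((m`!)%:R)^-1 * ('C(m, i))%:R : F).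
Proof.
move=> hi; rewrite -(bin_fact hi) !natrM.
have hC : ('C(m, i)%:R : F) != 0 by apply: (natr_neq0 hchar); rewrite -lt0n bin_gt0.
by field; rewrite !(factr_neq0 hchar) hC.
Qed.

Variable A : comAlgType F.

Lemma coef_prod_exp M N (t : nat -> A) m : (m <= N)%N ->
  (\prod_(0 <= k < M) \poly_(j < N.+1) ((j`!)%:R^-1 *: t k ^+ j))`_m =
  (m`!)%:R^-1 *: (\sum_(0 <= k < M) t k) ^+ m.
Proof.
elim: M m => [|M IH] m hm.
  rewrite !big_geq // coef1 expr0n; case: m hm => [|m] _ /=.
    by rewrite fact0 invr1 scale1r.
  by rewrite scaler0.
rewrite !big_nat_recr //= coefM addrC exprDn scaler_sumr; apply: eq_bigr => i _.
have him : (i <= m)%N by rewrite -ltnS.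
rewrite IH ?(leq_trans him) // coef_poly ifT; last by rewrite ltnS (leq_trans (leq_subr _ _)).
rewrite -scaler_nat scalerA -scalerAl -scalerAr scalerA inv_fact_binom //.
by congr (_ *: _); rewrite mulrC.
Qed.

Lemma multinomial M N (t : nat -> A) m : (m <= N)%N ->
  (\sum_(0 <= k < M) t k) ^+ m =
  (m`!)%:R *: \sum_(nu : M.-tuple 'I_N.+1 | (\sum_(0 <= k < M) tup_nat nu k == m)%N)
               \prod_(0 <= k < M) (((tup_nat nu k)`!)%:R^-1 *: t k ^+ tup_nat nu k).
Proof.
move=> hm; rewrite -(coef_prod_poly _ N (fun k j => (j`!)%:R^-1 *: t k ^+ j)).
rewrite coef_prod_exp // scalerA.
by rewrite divff ?(factr_neq0 hchar) ?scale1r.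
Qed.

End Multinomial.

Section BinomialSeriesCoef.
Variable F : fieldType.
Hypothesis hchar : [pchar F] =i pred0.

Lemma coef_exp_monomials M N (g : nat -> F) (w : nat -> nat) m n : (m <= N)%N ->
  ((\sum_(0 <= k < M) g k *: 'X^(w k)) ^+ m)`_n =
  (m`!)%:R * \sum_(nu : M.-tuple 'I_N.+1 | (\sum_(0 <= k < M) tup_nat nu k == m)%N
                   && (\sum_(0 <= k < M) w k * tup_nat nu k == n)%N)
               \prod_(0 <= k < M) (g k ^+ tup_nat nu k / ((tup_nat nu k)`!)%:R).
Proof.
move=> hm; rewrite (multinomial hchar _ _ hm) coefZ coef_sum big_mkcondr /=.
congr (_ * _); apply: eq_bigr => nu _.
under eq_bigr => k _ do rewrite exprZn -exprM scalerA -mul_polyC.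
rewrite big_split /= prodrXr -rmorph_prod coefCM coefXn eq_sym.
case: eqP => hn; rewrite ?mulr1 ?mulr0 //; apply: eq_bigr => k _.
by rewrite mulrC.
Qed.

Lemma binom_series_coef r M n (g : nat -> F) (w : nat -> nat) :
  (forall k, 0 < w k)%N ->
  (binom_series r n (\sum_(0 <= k < M) g k *: 'X^(w k)))`_n =
  \sum_(nu : M.-tuple 'I_n.+1 | (\sum_(0 <= k < M) w k * tup_nat nu k == n)%N)
     gbinom r (\sum_(0 <= k < M) tup_nat nu k)
     * ((\sum_(0 <= k < M) tup_nat nu k)`!)%:R
     * \prod_(0 <= k < M) (g k ^+ tup_nat nu k / ((tup_nat nu k)`!)%:R).
Proof.
move=> hw; pose size_nu (nu : M.-tuple 'I_n.+1) := (\sum_(0 <= k < M) tup_nat nu k)%N.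
rewrite (partition_big (fun nu => inord (size_nu nu) : 'I_n.+1) xpredT) //=.
rewrite coef_sum; apply: eq_bigr => m _.
rewrite coefZ (@coef_exp_monomials M n g w m n (ltn_ord m)) mulrA mulr_sumr.
apply: eq_big => [nu|nu]; last by case/andP=> /eqP <-.
rewrite andbC; case: eqP => //= hn; rewrite -val_eqE /= inordK // ltnS -hn.
by apply: leq_sum => k _; apply: leq_pmull.
Qed.

End BinomialSeriesCoef.

Section Truncations.
Variable F : fieldType.

Lemma eqmod_drop_high (g : nat -> F) (w : nat -> nat) n A B : (1 <= A <= B)%N ->
  (forall m, (A <= m < B)%N -> (n < w m)%N) ->
  eqmod n (\sum_(1 <= m < B) g m *: 'X^(w m)) (\sum_(1 <= m < A) g m *: 'X^(w m)).
Proof.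
move=> /andP[h1A hAB] hw k hk; rewrite (big_cat_nat h1A hAB) /= coefD.
rewrite -[RHS]addr0; congr (_ + _); rewrite coef_sum big1_seq // => m /andP[_].
rewrite mem_index_iota coefZ coefXn => /hw hm.
by rewrite eq_sym gtn_eqF ?mulr0 // (leq_ltn_trans hk hm).
Qed.

Lemma lhs_trunc_coef (a : nat -> F) n j : (1 <= j <= n)%N -> (lhs_trunc a n)`_j = a j.
Proof.
move=> hj; rewrite coefD coef1 gtn_eqF ?add0r; last by case/andP: hj.
rewrite coef_sum (bigD1_seq j) ?iota_uniq ?mem_index_iota ?ltnS //=.
rewrite coefZ coefXn eqxx mulr1 big1 ?addr0 // => m hm.
by rewrite coefZ coefXn eq_sym (negbTE hm) mulr0.
Qed.

Lemma lhs_trunc_coef0 (a : nat -> F) n : (lhs_trunc a n)`_0 = 1.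
Proof.
rewrite coefD coef1 coef_sum big1_seq ?addr0 // => m /andP[_].
by rewrite mem_index_iota coefZ coefXn => /andP[hm _]; rewrite eq_sym gtn_eqF ?mulr0.
Qed.

Lemma formal_identity_eqmod d (c : F) (a : nat -> F) n : (0 < d)%N ->
  formal_identity d c a -> eqmod n ((lhs_trunc a n) ^+ d) (rhs_trunc d c a n).
Proof.
move=> hd ha k hk.
have hlhs : eqmod k (lhs_trunc a n) (lhs_trunc a k).
  apply: eqmodD => //; apply: (@eqmod_drop_high a id); rewrite ?ltnS //.
  by move=> m /andP[].
have hrhs : eqmod k (rhs_trunc d c a n) (rhs_trunc d c a k).
  apply: eqmodD => //; apply: (@eqmod_drop_high a (fun m => m * d)%N).
    by rewrite !ltnS hk.
  by move=> m /andP[hm _]; apply: leq_trans hm _; rewrite leq_pmulr.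
by rewrite (eqmodX d hlhs) // ha hrhs.
Qed.

End Truncations.

Definition rhs_tail (F : fieldType) (d : nat) (c : F) (a : nat -> F) (M : nat) : {poly F} :=
  c *: 'X + \sum_(1 <= m < M) a m *: 'X^(m * d).

(* U_M as a sum of M monomials: rhs_coef k x^(rhs_deg k) for 0 <= k < M. *)
Definition rhs_coef (F : fieldType) (c : F) (a : nat -> F) (k : nat) : F :=
  if k is 0 then c else a k.
Definition rhs_deg (d k : nat) : nat := if k is 0 then 1 else k * d.

Section CoefficientFormula.
Variable F : fieldType.
Hypothesis hchar : [pchar F] =i pred0.
Variables (d : nat) (c : F) (a : nat -> F).
Hypothesis hd : (0 < d)%N.

Lemma rhs_tail_coef0 M : (rhs_tail d c a M)`_0 = 0.
Proof.
rewrite coefD coefZ coefX mulr0 add0r coef_sum big1_seq // => m /andP[_].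
rewrite mem_index_iota coefZ coefXn => /andP[hm _].
by rewrite eq_sym gtn_eqF ?mulr0 // muln_gt0 hm.
Qed.

Lemma coef_as_binom_series N M : formal_identity d c a ->
  (1 <= M <= N.+2)%N -> (N.+1 < M * d)%N ->
  a N.+1 = (binom_series d%:R^-1 N.+1 (rhs_tail d c a M))`_N.+1.
Proof.
move=> ha hM hMd.
rewrite -(@lhs_trunc_coef _ a N.+1) ?leqnn //.
rewrite (root_coef hchar hd (rhs_tail_coef0 _) (lhs_trunc_coef0 _ _)
                  (U := rhs_tail d c a N.+2)).
  apply: (@binom_series_eqmod F _ _ N.+1) => //; apply: eqmodD => //.
  apply: (@eqmod_drop_high _ a (fun m => m * d)%N) => // m /andP[hm _].
  by apply: leq_trans hMd _; rewrite leq_mul2r hm orbT.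
by rewrite /rhs_tail addrA; apply: formal_identity_eqmod.
Qed.

Lemma rhs_tail_monomials M : (0 < M)%N ->
  rhs_tail d c a M = \sum_(0 <= k < M) rhs_coef c a k *: 'X^(rhs_deg d k).
Proof.
move=> hM; rewrite big_ltn //= expr1; congr (_ + _).
by apply: eq_big_nat => -[|k] //=; rewrite ltnn.
Qed.

Lemma rhs_weight M (nu : nat -> nat) : (0 < M)%N ->
  (\sum_(0 <= k < M) rhs_deg d k * nu k = nu 0 + d * \sum_(1 <= k < M) k * nu k)%N.
Proof.
move=> hM; rewrite big_ltn //= mul1n big_distrr; congr (_ + _)%N.
by apply: eq_big_nat => -[|k] //= _; rewrite mulnCA mulnA mulnC.
Qed.

Lemma gbinom_inv_fact s :
  gbinom (d%:R : F)^-1 s * (s`!)%:R = (\prod_(0 <= j < s) (1 - j%:R * d%:R)) / d%:R ^+ s.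
Proof.
have hd0 : (d%:R : F) != 0 by apply: (natr_neq0 hchar); rewrite -lt0n.
rewrite /gbinom mulfVK ?(factr_neq0 hchar) // big_mkord -exprVn.
have -> : (d%:R : F)^-1 ^+ s = \prod_(j < s) d%:R^-1 by rewrite prodr_const card_ord.
by rewrite -big_split /=; apply: eq_bigr => j _; field.
Qed.

Lemma alpha_binom M (nu : nat -> nat) : (0 < M)%N ->
  alpha d c a M nu =
  gbinom (d%:R)^-1 (\sum_(0 <= k < M) nu k) * ((\sum_(0 <= k < M) nu k)`!)%:R
  * \prod_(0 <= k < M) (rhs_coef c a k ^+ nu k / ((nu k)`!)%:R).
Proof.
move=> hM; rewrite gbinom_inv_fact /alpha expr_sum.
rewrite [\prod_(0 <= i < M) _ ^+ _](big_ltn hM).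
rewrite [\prod_(0 <= k < M) (rhs_coef _ _ _ ^+ _ / _)](big_ltn hM) /=.
have -> : \prod_(1 <= k < M) (rhs_coef c a k ^+ nu k / ((nu k)`!)%:R) =
          \prod_(1 <= k < M) (a k ^+ nu k / ((nu k)`!)%:R).
  by apply: eq_big_nat => -[].
rewrite [\prod_(1 <= k < M) (a k ^+ _ / (_ * _))]
  (eq_bigr (fun k => a k ^+ nu k / ((nu k)`!)%:R / d%:R ^+ nu k)); last first.
  by move=> k _; rewrite invfM mulrA mulrAC.
rewrite big_split prodfV /=.
move: (\prod_(0 <= j < _) _) (\prod_(1 <= k < M) (a k ^+ _ / _)).
move: (\prod_(1 <= k < M) (_ ^+ nu k)) => D J A.
by rewrite !invfM; ring.
Qed.

(* Case n < d: only the term c x of U contributes. *)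
Lemma coef_small n : formal_identity d c a -> (1 <= n < d)%N ->
  a n = gbinom (d%:R)^-1 n * c ^+ n.
Proof.
move=> ha /andP[]; case: n => [//|N] _ hNd.
rewrite (@coef_as_binom_series N 1) ?mul1n // /rhs_tail big_geq // addr0.
exact: binom_series_coef_linear.
Qed.

Lemma coef_general M n : formal_identity d c a -> (0 < M <= n)%N -> (n < M * d)%N ->
  a n = \sum_(nu : M.-tuple 'I_n.+1 |
                 (tup_nat nu 0 + d * \sum_(1 <= k < M) k * tup_nat nu k == n)%N)
          alpha d c a M (tup_nat nu).
Proof.
move=> ha /andP[hM hMn] hnMd.
case: n hMn hnMd => [|N] hMn hnMd; first by have := leq_trans hM hMn.
rewrite (@coef_as_binom_series N M) // ?hM ?(leq_trans hMn) //.
rewrite rhs_tail_monomials // (binom_series_coef hchar); last by case=> //= k; rewrite muln_gt0 hd.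
by apply: eq_big => [nu|nu _]; rewrite ?rhs_weight ?alpha_binom.
Qed.

End CoefficientFormula.

Theorem proposition3p1 (F : fieldType) (hchar : [pchar F] =i pred0)
  (d : nat) (hd : (2 <= d)%N) (c : F) (a : nat -> F)
  (ha : formal_identity d c a) :
  (forall n : nat, (1 <= n < d)%N -> a n = gbinom (d%:R)^-1 n * c ^+ n)
  /\
  (forall i n : nat, (1 <= i)%N -> (d ^ i <= n < d ^ i.+1)%N ->
     a n = \sum_(t : (d ^ i).-tuple 'I_n.+1 |
                 (tup_nat t 0 + d * \sum_(1 <= k < d ^ i) k * tup_nat t k == n)%N)
             alpha d c a (d ^ i) (tup_nat t)).
Proof.
have hd0 : (0 < d)%N by apply: leq_trans hd.
split=> [n hn | i n _ /andP[hlo hhi]]; first exact: coef_small.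
apply: coef_general => //; first by rewrite expn_gt0 hd0 hlo.
by rewrite -expnSr.
Qed.
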